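(* Let $q\in\mathbb C$ with $|q|=1$, $q^2\neq1$, let $A,B$ be self-adjoint operators on a Hilbert space $\mathcal H$, and let $\lambda,\lambda q\in\rho(A)$, $\mu,\mu q\in\rho(B)$. Then (a) the operator inclusion $qR_{\lambda q}(A)B\subseteq BR_\lambda(A)$ holds if and only if $$R_\lambda(A)R_\mu(B)=qR_{\mu q}(B)R_{\lambda q}(A)+\mu\lambda q(q-1)R_{\mu q}(B)R_{\lambda q}(A)R_\lambda(A)R_\mu(B)$$ holds as an identity of bounded operators on $\mathcal H$; (b) the operator inclusion $R_\mu(B)A\subseteq qAR_{\mu q}(B)$ holds if and only if $$R_\lambda(A)R_\mu(B)=qR_{\mu q}(B)R_{\lambda q}(A)+\mu\lambda q(q-1)R_\lambda(A)R_\mu(B)R_{\mu q}(B)R_{\lambda q}(A)$$ holds on $\mathcal H$.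
   Context: $\rho(T)$ denotes the resolvent set and $R_\lambda(T)=(T-\lambda I)^{-1}$ the resolvent of a closed operator $T$. For operators $S,T$, $S\subseteq T$ means $T$ is an extension of $S$; products of unbounded operators have their natural domains. *)

From Stdlib Require Import Reals.
Open Scope R_scope.

Record Cpx := mkC { re : R; im : R }.
Definition Czero : Cpx := mkC 0 0.
Definition Cone : Cpx := mkC 1 0.
Definition Cadd (a b : Cpx) : Cpx := mkC (re a + re b) (im a + im b).
Definition Copp (a : Cpx) : Cpx := mkC (- re a) (- im a).
Definition Csub (a b : Cpx) : Cpx := Cadd a (Copp b).
Definition Cmul (a b : Cpx) : Cpx :=
  mkC (re a * re b - im a * im b) (re a * im b + im a * re b).
Definition Cconj (a : Cpx) : Cpx := mkC (re a) (- im a).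
Definition Cnorm (a : Cpx) : R := sqrt (re a * re a + im a * im a).

Record HilbertSpace := {
  hcar :> Type;
  vzero : hcar;
  vadd : hcar -> hcar -> hcar;
  vopp : hcar -> hcar;
  vscal : Cpx -> hcar -> hcar;
  inner : hcar -> hcar -> Cpx;   (* linear in the first argument *)
  vaddA : forall x y z, vadd x (vadd y z) = vadd (vadd x y) z;
  vaddC : forall x y, vadd x y = vadd y x;
  vadd0 : forall x, vadd x vzero = x;
  vaddN : forall x, vadd x (vopp x) = vzero;
  vscal1 : forall x, vscal Cone x = x;
  vscalA : forall a b x, vscal a (vscal b x) = vscal (Cmul a b) x;
  vscalDl : forall a b x, vscal (Cadd a b) x = vadd (vscal a x) (vscal b x);
  vscalDr : forall a x y, vscal a (vadd x y) = vadd (vscal a x) (vscal a y);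
  inner_addl : forall x y z, inner (vadd x y) z = Cadd (inner x z) (inner y z);
  inner_scall : forall a x y, inner (vscal a x) y = Cmul a (inner x y);
  inner_sym : forall x y, inner y x = Cconj (inner x y);
  inner_pos : forall x, 0 <= re (inner x x);
  inner_def : forall x, inner x x = Czero -> x = vzero;
  hcomplete : forall u : nat -> hcar,
    (forall eps, 0 < eps -> exists N, forall m n, (N <= m)%nat -> (N <= n)%nat ->
        sqrt (re (inner (vadd (u m) (vopp (u n))) (vadd (u m) (vopp (u n))))) < eps) ->
    exists l, forall eps, 0 < eps -> exists N, forall n, (N <= n)%nat ->
        sqrt (re (inner (vadd (u n) (vopp l)) (vadd (u n) (vopp l)))) < eps
}.

Arguments vzero {h}. Arguments vadd {h}. Arguments vopp {h}.
Arguments vscal {h}. Arguments inner {h}.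

Section Ops.
Variable H : HilbertSpace.

Definition vsub (x y : H) : H := vadd x (vopp y).
Definition hnorm (x : H) : R := sqrt (re (inner x x)).

(* Partial operator: a domain and an action (meaningful on the domain). *)
Record pop := { dom : H -> Prop; app : H -> H }.

Definition total (f : H -> H) : pop := {| dom := fun _ => True; app := f |}.

Definition op_incl (S T : pop) : Prop :=
  (forall x, dom S x -> dom T x) /\ (forall x, dom S x -> app S x = app T x).

Definition op_comp (S T : pop) : pop :=
  {| dom := fun x => dom T x /\ dom S (app T x); app := fun x => app S (app T x) |}.

Definition op_scal (c : Cpx) (T : pop) : pop :=
  {| dom := dom T; app := fun x => vscal c (app T x) |}.

Definition linear_op (T : pop) : Prop :=
  dom T vzero /\
  (forall x y, dom T x -> dom T y -> dom T (vadd x y) /\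
      app T (vadd x y) = vadd (app T x) (app T y)) /\
  (forall c x, dom T x -> dom T (vscal c x) /\ app T (vscal c x) = vscal c (app T x)).

Definition dense (D : H -> Prop) : Prop :=
  forall x eps, 0 < eps -> exists y, D y /\ hnorm (vsub x y) < eps.

(* (y, z) belongs to the graph of the adjoint T* *)
Definition adjoint_graph (T : pop) (y z : H) : Prop :=
  forall x, dom T x -> inner (app T x) y = inner x z.

Definition self_adjoint (T : pop) : Prop :=
  linear_op T /\ dense (dom T) /\
  (forall x, dom T x -> adjoint_graph T x (app T x)) /\
  (forall y z, adjoint_graph T y z -> dom T y /\ app T y = z).

Definition bounded_map (f : H -> H) : Prop :=
  exists M, forall x, hnorm (f x) <= M * hnorm x.

(* R is the resolvent (T - lam I)^{-1}: a bounded everywhere-defined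
   two-sided inverse of T - lam I : D(T) -> H.  Existence of such R is
   exactly lam ∈ ρ(T). *)
Definition is_resolvent (T : pop) (lam : Cpx) (Rf : H -> H) : Prop :=
  bounded_map Rf /\
  (forall y, dom T (Rf y) /\ vsub (app T (Rf y)) (vscal lam (Rf y)) = y) /\
  (forall x, dom T x -> Rf (vsub (app T x) (vscal lam x)) = x).

Definition resolvent_set (T : pop) (lam : Cpx) : Prop :=
  exists Rf, is_resolvent T lam Rf.

End Ops.

Arguments total {H}. Arguments op_incl {H}. Arguments op_comp {H}.
Arguments op_scal {H}. Arguments self_adjoint {H}. Arguments is_resolvent {H}.
Arguments dom {H}. Arguments app {H}.

(* Both parts of the theorem are instances of one fact about intertwining.
   For an operator T with resolvents R = R_nu(T), R' = R_nu'(T) and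
   everywhere-defined maps F (linear) and G, the relation F T ⊆ T G, i.e.
   "G maps D(T) into D(T) and T G x = F T x", is equivalent to the
   bounded identity  G R = R' (F + nu F R - nu' G R)  (Lemma
   intertwines_resolvent_iff): the point is that R is a bijection of H onto
   D(T) and that R' y = w iff w ∈ D(T) and T w = y + nu' w.
   Part (a) is the instance T = B, F = q R_{lam q}(A), G = R_lam(A); part (b)
   is T = A, F = R_mu(B), G = q R_{mu q}(B).  In each case the first
   resolvent identity R_l - R_l' = (l - l') R_l' R_l turns the instance into
   the identity of the theorem.  Only the
   linearity of A and B and q ≠ 0 (from |q| = 1) are used. *)
From Stdlib Require Import Reals Lra.
Open Scope R_scope.
Arguments vsub {H}.

Lemma Cext (a b : Cpx) : re a = re b -> im a = im b -> a = b.
Proof. destruct a, b; simpl; intros; subst; reflexivity. Qed.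

Section VectorIdentities.
Variable H : HilbertSpace.

Lemma inner_zero (z : H) : inner vzero z = Czero.
Proof.
  assert (E : inner (vadd vzero vzero) z = Cadd (inner vzero z) (inner vzero z))
    by apply inner_addl.
  rewrite vadd0 in E.
  pose proof (f_equal re E) as Ere; pose proof (f_equal im E) as Eim.
  simpl in Ere, Eim; apply Cext; simpl; lra.
Qed.

Lemma inner_opp (x z : H) : inner (vopp x) z = Copp (inner x z).
Proof.
  assert (E : inner (vadd x (vopp x)) z = Cadd (inner x z) (inner (vopp x) z))
    by apply inner_addl.
  rewrite vaddN, inner_zero in E.
  pose proof (f_equal re E) as Ere; pose proof (f_equal im E) as Eim.
  simpl in Ere, Eim; apply Cext; simpl; lra.
Qed.

(* Vectors with the same inner products against every z are equal
   (definiteness of the inner product); this reduces every vector identity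
   to an identity of complex coefficients. *)
Lemma veq_inner (x y : H) : (forall z, inner x z = inner y z) -> x = y.
Proof.
  intros Hz.
  assert (Diff0 : vadd x (vopp y) = vzero).
  { apply inner_def. rewrite inner_addl, inner_opp, Hz.
    apply Cext; simpl; ring. }
  rewrite <- (vadd0 _ x), <- (vaddN _ y), (vaddC _ y), vaddA, Diff0, vaddC, vadd0.
  reflexivity.
Qed.
End VectorIdentities.

Ltac vsolve :=
  apply veq_inner; intro; unfold vsub;
  repeat first [ rewrite inner_addl | rewrite inner_scall | rewrite inner_opp
               | rewrite inner_zero ];
  apply Cext; unfold Cadd, Cmul, Copp, Csub, Czero, Cone; simpl; ring.

Section Resolvents.
Variable H : HilbertSpace.

Definition linear_map (f : H -> H) : Prop :=
  (forall x y, f (vadd x y) = vadd (f x) (f y)) /\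
  (forall c x, f (vscal c x) = vscal c (f x)).

Lemma linear_map_scal (c : Cpx) (f : H -> H) :
  linear_map f -> linear_map (fun x => vscal c (f x)).
Proof.
  intros [f_add f_scal]; split; intros.
  - rewrite f_add; vsolve.
  - rewrite f_scal; vsolve.
Qed.

Lemma linear_map_sub (f : H -> H) (x y : H) :
  linear_map f -> f (vsub x y) = vsub (f x) (f y).
Proof.
  intros [f_add f_scal].
  replace (vsub x y) with (vadd x (vscal (Copp Cone) y)) by vsolve.
  rewrite f_add, f_scal; vsolve.
Qed.

Variables (T : pop H) (l : Cpx) (R : H -> H).
Hypothesis HR : is_resolvent T l R.

Lemma resolvent_solves (y : H) : dom T (R y) /\ app T (R y) = vadd y (vscal l (R y)).
Proof.
  destruct HR as [_ [Hsolve _]]. destruct (Hsolve y) as [D E].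
  split; [exact D|]. set (w := R y) in *; clearbody w. rewrite <- E; vsolve.
Qed.

Lemma resolvent_unique (y w : H) :
  dom T w -> app T w = vadd y (vscal l w) -> R y = w.
Proof.
  intros D E. destruct HR as [_ [_ Hinv]].
  replace y with (vsub (app T w) (vscal l w)) by (rewrite E; vsolve).
  exact (Hinv w D).
Qed.

Lemma resolvent_linear : linear_op H T -> linear_map R.
Proof.
  intros [_ [T_add T_scal]]; split.
  - intros x y.
    destruct (resolvent_solves x) as [Dx Ex]; destruct (resolvent_solves y) as [Dy Ey].
    destruct (T_add _ _ Dx Dy) as [D E].
    apply resolvent_unique; [exact D|]. rewrite E, Ex, Ey; vsolve.
  - intros c x.
    destruct (resolvent_solves x) as [Dx Ex].
    destruct (T_scal c _ Dx) as [D E].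
    apply resolvent_unique; [exact D|]. rewrite E, Ex; vsolve.
Qed.
End Resolvents.

Arguments linear_map {H}.

Lemma resolvent_identity (H : HilbertSpace) (T : pop H) (l l' : Cpx) (R R' : H -> H) :
  linear_op H T -> is_resolvent T l R -> is_resolvent T l' R' ->
  forall y, vsub (R' y) (R y) = vscal (Csub l' l) (R' (R y)).
Proof.
  intros HT HR HR' y.
  destruct (resolvent_solves H T l R HR y) as [D E].
  assert (Shift : R' (vadd y (vscal (Csub l l') (R y))) = R y).
  { apply (resolvent_unique H T l' R' HR'); [exact D|]. rewrite E; vsolve. }
  destruct (resolvent_linear H T l' R' HR' HT) as [R'_add R'_scal].
  rewrite R'_add, R'_scal in Shift.
  set (u := R' (R y)) in *; clearbody u. rewrite <- Shift; vsolve.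
Qed.

Section Intertwining.
Variable H : HilbertSpace.

Definition intertwines (T : pop H) (F G : H -> H) : Prop :=
  forall x, dom T x -> dom T (G x) /\ app T (G x) = F (app T x).

Lemma intertwines_resolvent_iff (T : pop H) (nu nu' : Cpx) (R R' F G : H -> H) :
  is_resolvent T nu R -> is_resolvent T nu' R' -> linear_map F ->
  intertwines T F G <->
  (forall y, G (R y) =
     R' (vadd (F y) (vsub (vscal nu (F (R y))) (vscal nu' (G (R y)))))).
Proof.
  intros HR HR' HF. split.
  - intros Hint y.
    destruct (resolvent_solves H T nu R HR y) as [Dw Ew].
    destruct (Hint _ Dw) as [DGw EGw].
    symmetry; apply (resolvent_unique H T nu' R' HR'); [exact DGw|].
    destruct HF as [F_add F_scal].
    rewrite EGw, Ew, F_add, F_scal; vsolve.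
  - intros Hid x Dx.
    assert (Rx : R (vsub (app T x) (vscal nu x)) = x)
      by (destruct HR as [_ [_ Hinv]]; exact (Hinv x Dx)).
    pose proof (Hid (vsub (app T x) (vscal nu x))) as HGx.
    rewrite Rx in HGx.
    destruct (resolvent_solves H T nu' R' HR'
      (vadd (F (vsub (app T x) (vscal nu x))) (vsub (vscal nu (F x)) (vscal nu' (G x)))))
      as [D E].
    rewrite <- HGx in D, E. split; [exact D|].
    rewrite E, (linear_map_sub H F _ _ HF). destruct HF as [_ F_scal].
    rewrite F_scal; vsolve.
Qed.

Lemma incl_scaled_left_iff (T : pop H) (q : Cpx) (F G : H -> H) :
  op_incl (op_scal q (op_comp (total F) T)) (op_comp T (total G)) <->
  intertwines T (fun x => vscal q (F x)) G.
Proof.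
  unfold op_incl, intertwines; cbn. split.
  - intros [Hdom Happ] x Dx.
    destruct (Hdom x (conj Dx I)) as [_ D].
    split; [exact D|]. symmetry; exact (Happ x (conj Dx I)).
  - intros Hint; split; intros x [Dx _]; destruct (Hint x Dx) as [D E].
    + split; [exact I | exact D].
    + symmetry; exact E.
Qed.

Lemma incl_scaled_right_iff (T : pop H) (q qi : Cpx) (F G : H -> H) :
  linear_op H T -> Cmul qi q = Cone ->
  op_incl (op_comp (total F) T) (op_scal q (op_comp T (total G))) <->
  intertwines T F (fun x => vscal q (G x)).
Proof.
  intros [_ [_ T_scal]] Hqi.
  assert (Unscale : forall z, dom T (vscal q z) -> dom T z).
  { intros z D. destruct (T_scal qi _ D) as [D' _].
    rewrite vscalA, Hqi, vscal1 in D'. exact D'. }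
  unfold op_incl, intertwines; cbn. split.
  - intros [Hdom Happ] x Dx.
    destruct (Hdom x (conj Dx I)) as [_ D].
    destruct (T_scal q _ D) as [Dq Eq].
    split; [exact Dq|]. rewrite Eq. symmetry; exact (Happ x (conj Dx I)).
  - intros Hint; split; intros x [Dx _]; destruct (Hint x Dx) as [D E];
      pose proof (Unscale _ D) as DG; destruct (T_scal q _ DG) as [_ Eq].
    + split; [exact I | exact DG].
    + rewrite <- Eq, E. reflexivity.
Qed.
End Intertwining.

Arguments intertwines {H}.

Section CommutationRelations.
Variables (H : HilbertSpace) (q lam mu : Cpx) (A B : pop H)
  (RA RAq RB RBq : H -> H).
Hypotheses (LA : linear_op H A) (LB : linear_op H B)
  (HRA : is_resolvent A lam RA) (HRAq : is_resolvent A (Cmul lam q) RAq)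
  (HRB : is_resolvent B mu RB) (HRBq : is_resolvent B (Cmul mu q) RBq).

Let c : Cpx := Cmul (Cmul (Cmul mu lam) q) (Csub q Cone).

Lemma commutation_a :
  intertwines B (fun x => vscal q (RAq x)) RA <->
  (forall x, RA (RB x) = vadd (vscal q (RBq (RAq x))) (vscal c (RBq (RAq (RA (RB x)))))).
Proof.
  rewrite (intertwines_resolvent_iff H B mu (Cmul mu q) RB RBq _ _ HRB HRBq
             (linear_map_scal H q RAq (resolvent_linear H A _ RAq HRAq LA))).
  assert (Same : forall y,
    RBq (vadd (vscal q (RAq y))
      (vsub (vscal mu (vscal q (RAq (RB y)))) (vscal (Cmul mu q) (RA (RB y))))) =
    vadd (vscal q (RBq (RAq y))) (vscal c (RBq (RAq (RA (RB y)))))).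
  { intro y.
    pose proof (resolvent_identity H A lam (Cmul lam q) RA RAq LA HRA HRAq (RB y)) as Id.
    replace (vsub (vscal mu (vscal q (RAq (RB y)))) (vscal (Cmul mu q) (RA (RB y))))
      with (vscal (Cmul mu q) (vsub (RAq (RB y)) (RA (RB y)))) by vsolve.
    rewrite Id.
    destruct (resolvent_linear H B _ RBq HRBq LB) as [RBq_add RBq_scal].
    rewrite RBq_add, !RBq_scal. unfold c; vsolve. }
  split; intros E y; [rewrite <- Same | rewrite Same]; apply E.
Qed.

Lemma commutation_b :
  intertwines A RB (fun x => vscal q (RBq x)) <->
  (forall x, RA (RB x) = vadd (vscal q (RBq (RAq x))) (vscal c (RA (RB (RBq (RAq x)))))).
Proof.
  rewrite (intertwines_resolvent_iff H A (Cmul lam q) lam RAq RA _ _ HRAq HRA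
             (resolvent_linear H B mu RB HRB LB)).
  assert (Expand : forall y,
    RA (vadd (RB y) (vsub (vscal (Cmul lam q) (RB (RAq y)))
                          (vscal lam (vscal q (RBq (RAq y)))))) =
    vadd (RA (RB y)) (vscal (Cmul (Cmul lam q) (Csub mu (Cmul mu q)))
                            (RA (RB (RBq (RAq y)))))).
  { intro y.
    pose proof (resolvent_identity H B (Cmul mu q) mu RBq RB LB HRBq HRB (RAq y)) as Id.
    replace (vsub (vscal (Cmul lam q) (RB (RAq y))) (vscal lam (vscal q (RBq (RAq y)))))
      with (vscal (Cmul lam q) (vsub (RB (RAq y)) (RBq (RAq y)))) by vsolve.
    rewrite Id.
    destruct (resolvent_linear H A lam RA HRA LA) as [RA_add RA_scal].
    rewrite RA_add, !RA_scal; vsolve. }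
  split; intros E y; specialize (E y).
  - rewrite Expand in E. rewrite E. unfold c; vsolve.
  - rewrite Expand, E. unfold c; vsolve.
Qed.
End CommutationRelations.

Lemma unit_modulus_invertible (q : Cpx) : Cnorm q = 1 -> exists qi, Cmul qi q = Cone.
Proof.
  destruct q as [a b]. unfold Cnorm; simpl. intro Hn.
  assert (Hpos : a * a + b * b <> 0) by (intro E; rewrite E, sqrt_0 in Hn; lra).
  exists (mkC (a / (a * a + b * b)) (- b / (a * a + b * b))).
  apply Cext; simpl; field; exact Hpos.
Qed.

Theorem mainTheorem4 (H : HilbertSpace) (q lam mu : Cpx) (A B : pop H)
  (RA RAq RB RBq : H -> H) :
  Cnorm q = 1 -> Cmul q q <> Cone ->
  self_adjoint A -> self_adjoint B ->
  is_resolvent A lam RA -> is_resolvent A (Cmul lam q) RAq ->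
  is_resolvent B mu RB -> is_resolvent B (Cmul mu q) RBq ->
  (op_incl (op_scal q (op_comp (total RAq) B)) (op_comp B (total RA)) <->
   (forall x : H, RA (RB x) =
      vadd (vscal q (RBq (RAq x)))
           (vscal (Cmul (Cmul (Cmul mu lam) q) (Csub q Cone))
                  (RBq (RAq (RA (RB x)))))))
  /\
  (op_incl (op_comp (total RB) A) (op_scal q (op_comp A (total RBq))) <->
   (forall x : H, RA (RB x) =
      vadd (vscal q (RBq (RAq x)))
           (vscal (Cmul (Cmul (Cmul mu lam) q) (Csub q Cone))
                  (RA (RB (RBq (RAq x))))))).
Proof.
  intros Hq _ [LA _] [LB _] HRA HRAq HRB HRBq.
  destruct (unit_modulus_invertible q Hq) as [qi Hqi].
  split.
  - rewrite incl_scaled_left_iff.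
    exact (commutation_a H q lam mu A B RA RAq RB RBq LA LB HRA HRAq HRB HRBq).
  - rewrite (incl_scaled_right_iff H A q qi RB RBq LA Hqi).
    exact (commutation_b H q lam mu A B RA RAq RB RBq LA LB HRA HRAq HRB HRBq).
Qed.
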